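(* Let $\alpha,\beta\in\mathbb{R}^n_{>}$. Then $\alpha$-GSP is Vickrey-preserving on $\Theta^\beta$ if and only if, for every $\theta\in\Theta^\beta$ (with the agents indexed so that $v_1(\theta_1)\ge v_2(\theta_2)\ge\dots\ge v_n(\theta_n)$ and with $v_{n+1}(\theta_{n+1}):=0$), the sequence $\{p_j(\theta)/\alpha_j\}_{j=1,\dots,k}$ is decreasing, where $$p_j(\theta)=\sum_{i=j}^{k} v_{i+1}(\theta_{i+1})\cdot(\beta_i-\beta_{i+1}).$$
   Context: Sponsored search setting: a set $N=\{1,\dots,n\}$ of agents and $k\le n$ slots $1,\dots,k$. An outcome assigns the agents to distinct positions in $\{1,\dots,n\}$; an agent in position $j\le k$ receives slot $j$, an agent in a position $>k$ receives nothing (value $0$). Utilities are quasilinear (value minus payment). $\mathbb{R}^n_{>}$ denotes the set of vectors $\alpha$ with $1=\alpha_1>\alpha_2>\dots>\alpha_k>0$ and $\alpha_j=0$ for $j>k$ (also set $\alpha_{n+1}=0$). For $\beta\in\mathbb{R}^n_{>}$, $\Theta^\beta$ is the set of type profiles $\theta$ such that each agent $i$ has a per-click value $v_i(\theta_i)\ge 0$ and values slot $j$ at $\beta_j\cdot v_i(\theta_i)$. The (fully expressive) VCG mechanism: each agent reports a bid $x_{i,j}$ for each slot $j$; it chooses an assignment maximizing the sum of the bids of agents on their assigned slots and charges each agent $i$ the Clarke payment (maximum total bid of the others over all assignments minus the others' total bid in the chosen assignment). The VCG outcome for $\theta$ is the assignment and payments of VCG when every agent bids its true value for every slot. $\alpha$-GSP: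 each agent $i$ submits a single number $b_i\ge 0$ (equivalently, the bid vector $(\alpha_1 b_i,\dots,\alpha_k b_i)$ in the GSP mechanism); agents are ranked by $b_i$ (ties broken arbitrarily); the agent of rank $j\le k$ receives slot $j$ and pays $\alpha_j$ times the $(j+1)$-st highest value of $b$ (zero if there is none). This is the GSP mechanism (slots sold in order $1,\dots,k$, each to the highest remaining bidder on that slot at the second-highest remaining bid on that slot) restricted to such bid vectors. Complete information: for a given type profile, a message profile is a Nash equilibrium if no agent can strictly increase its utility by unilaterally changing its message within its allowed message set. A mechanism is Vickrey-preserving on a set $T$ of type profiles if for every $\theta\in T$ it has a Nash equilibrium (for $\theta$) yielding the VCG outcome for $\theta$ (same assignment and payments). *)

From HB Require Import structures.
From mathcomp Require Import all_boot all_order all_algebra perm.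
From mathcomp Require Import reals.
Set Implicit Arguments. Unset Strict Implicit. Unset Printing Implicit Defensive.
Import Order.TTheory GRing.Theory Num.Theory.
Local Open Scope ring_scope.

(* Conventions: agents are 'I_n, positions/slots are 0-based.
   Position p (0-based) corresponds to position p+1 in the paper;
   positions p < k are the slots, positions p >= k receive nothing.
   Weight vectors alpha, beta are nat-indexed (0-based): a j = alpha_{j+1}. *)

Section Defs.
Variable R : realType.

Definition Rn_gt (n k : nat) (a : nat -> R) : Prop :=
  [/\ (0 < k)%N, (k <= n)%N & a 0%N = 1] /\
  [/\ (forall j : nat, (j.+1 < k)%N -> a j.+1 < a j),
      0 < a k.-1
    & (forall j : nat, (k <= j)%N -> a j = 0)].

(* t-th highest (0-based) entry of x : 'I_n -> R; 0 if t >= n. *)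
Definition nth_highest (n : nat) (x : 'I_n -> R) (t : nat) : R :=
  nth 0 (sort (fun u w : R => w <= u) [seq x i | i <- enum 'I_n]) t.

(* Outcome: slot allocation (None = no slot) and payments. *)
Definition outcome (n k : nat) : Type :=
  ({ffun 'I_n -> option 'I_k} * {ffun 'I_n -> R})%type.

Definition slot_of (k : nat) (p : nat) : option 'I_k := insub p.

Definition utility (n k : nat) (beta : nat -> R) (v : 'I_n -> R)
    (o : outcome n k) (i : 'I_n) : R :=
  (if o.1 i is Some j then beta (val j) * v i else 0) - o.2 i.

(* an assignment is a bijection agents -> positions {0..n-1} *)
Definition welfare (n : nat) (beta : nat -> R) (v : 'I_n -> R)
    (s : {perm 'I_n}) : R :=
  \sum_(l : 'I_n) beta (val (s l)) * v l.

Definition welfare_others (n : nat) (beta : nat -> R) (v : 'I_n -> R)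
    (s : {perm 'I_n}) (i : 'I_n) : R :=
  \sum_(l : 'I_n | l != i) beta (val (s l)) * v l.

Definition clarke (n : nat) (beta : nat -> R) (v : 'I_n -> R)
    (s : {perm 'I_n}) (i : 'I_n) : R :=
  \big[Num.max/welfare_others beta v 1%g i]_(t : {perm 'I_n})
      welfare_others beta v t i
  - welfare_others beta v s i.

Definition vcg_outcome (n k : nat) (beta : nat -> R) (v : 'I_n -> R)
    (o : outcome n k) : Prop :=
  exists s : {perm 'I_n},
    (forall t : {perm 'I_n}, welfare beta v t <= welfare beta v s) /\
    o = ([ffun i => slot_of k (val (s i))], [ffun i => clarke beta v s i]).

Definition consistent_ranking (n : nat) (b : 'I_n -> R) (r : {perm 'I_n}) :=
  forall i l : 'I_n, (val (r i) < val (r l))%N -> b l <= b i.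

Definition gsp_outcome (n k : nat) (a : nat -> R) (b : 'I_n -> R)
    (o : outcome n k) : Prop :=
  exists r : {perm 'I_n}, consistent_ranking b r /\
    o = ([ffun i => slot_of k (val (r i))],
         [ffun i => if (val (r i) < k)%N
                    then a (val (r i)) * nth_highest b (val (r i)).+1
                    else 0]).

Definition update_bid (n : nat) (b : 'I_n -> R) (i : 'I_n) (x : R) : 'I_n -> R :=
  fun l => if l == i then x else b l.

(* b (with the realized outcome o) is a Nash equilibrium of alpha-GSP for
   the type profile v: o is a GSP outcome of b, and no unilateral deviation
   to an allowed message x >= 0 (under any tie-breaking) strictly increases
   the deviator's utility. *)
Definition gsp_nash (n k : nat) (a beta : nat -> R) (v : 'I_n -> R)
    (b : 'I_n -> R) (o : outcome n k) : Prop :=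
  (forall i, 0 <= b i) /\ gsp_outcome a b o /\
  forall (i : 'I_n) (x : R), 0 <= x ->
    forall o' : outcome n k, gsp_outcome a (update_bid b i x) o' ->
      utility beta v o' i <= utility beta v o i.

Definition gsp_vickrey_preserving (n k : nat) (a beta : nat -> R) : Prop :=
  forall v : 'I_n -> R, (forall i, 0 <= v i) ->
    exists (b : 'I_n -> R) (o : outcome n k),
      vcg_outcome beta v o /\ gsp_nash a beta v b o.

(* p_j(theta) (0-based j) = sum_{i=j}^{k-1} v_(i+1) (beta_i - beta_{i+1}),
   where v_(t) is the t-th highest value (0-based), 0 for t >= n. *)
Definition vcg_price (n k : nat) (beta : nat -> R) (v : 'I_n -> R) (j : nat) : R :=
  \sum_(j <= i < k) nth_highest v i.+1 * (beta i - beta i.+1).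

End Defs.

(* An optimal assignment puts the k highest values into the k slots (by a swap
   argument), and the Clarke payment of the agent in slot j is its externality
   p_j: without it, every agent below slot j moves up one position.

   If a GSP equilibrium realises this outcome, the agent in slot j pays alpha_j
   times the (j+1)-st highest bid, so p_j / alpha_j is that bid and decreases
   with j.

   Conversely, if p_j / alpha_j decreases, let the agent in position j+1 bid
   p_j / alpha_j. GSP then reproduces the VCG outcome. An agent deviating to
   slot j is ranked above one of the other agents of positions at most j+1, so
   it pays at least p_j; since beta_j v - p_j is maximal at the agent's own
   position (VCG prices are envy-free), the deviation does not pay. *)

From HB Require Import structures.
From mathcomp Require Import all_boot all_order all_algebra perm.
From mathcomp Require Import reals.
From mathcomp Require Import zify ring lra.
Import Order.TTheory GRing.Theory Num.Theory.
Local Open Scope ring_scope.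
Set Implicit Arguments. Unset Strict Implicit. Unset Printing Implicit Defensive.

Lemma drop_catl (T : Type) (s1 s2 : seq T) m : (m <= size s1)%N ->
  drop m (s1 ++ s2) = drop m s1 ++ s2.
Proof.
rewrite drop_cat leq_eqVlt => /orP[/eqP -> | -> //].
by rewrite ltnn subnn drop0 drop_size.
Qed.

Section NthHighest.
Variables (R : realType) (n : nat).
Implicit Types (x v : 'I_n -> R) (s t r : {perm 'I_n}).

Local Notation ger := (fun u w : R => w <= u).
Let ger_total : total ger := @ge_total _ R.
Let ger_trans : transitive ger := @ge_trans _ R.
Let ger_anti : antisymmetric ger := @ge_anti _ R.

Definition sorted_values x : seq R := sort ger [seq x i | i <- enum 'I_n].

Definition values_by_position x t : seq R := [seq x (t^-1 m)%g | m <- enum 'I_n].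

Definition dominant (k : nat) x t :=
  forall a b : 'I_n, (a < b)%N -> (a < k)%N -> x (t^-1 b)%g <= x (t^-1 a)%g.

Lemma nth_highestE x m : nth_highest x m = nth 0 (sorted_values x) m.
Proof. by []. Qed.

Lemma size_sorted_values x : size (sorted_values x) = n.
Proof. by rewrite size_sort size_map size_enum_ord. Qed.

Lemma size_values_by_position x t : size (values_by_position x t) = n.
Proof. by rewrite size_map size_enum_ord. Qed.

Lemma nth_map_ord (F : 'I_n -> R) m (lt_mn : (m < n)%N) :
  nth 0 [seq F i | i <- enum 'I_n] m = F (Ordinal lt_mn).
Proof.
rewrite (nth_map (Ordinal lt_mn)) ?size_enum_ord //; congr F.
by apply: val_inj; rewrite /= nth_enum_ord.
Qed.

Lemma nth_values_by_position x t (m : 'I_n) :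
  nth 0 (values_by_position x t) m = x (t^-1 m)%g.
Proof. by rewrite (nth_map_ord _ (ltn_ord m)); congr (x (t^-1 _)%g); apply: val_inj. Qed.

Lemma perm_values_by_position x t :
  perm_eq [seq x i | i <- enum 'I_n] (values_by_position x t).
Proof.
rewrite /values_by_position (map_comp x (fun m => t^-1 m)%g); apply: perm_map.
apply: uniq_perm; first exact: enum_uniq.
  by rewrite map_inj_uniq ?enum_uniq //; apply: (@perm_inj _ t^-1).
by move=> i; rewrite mem_enum; apply/esym/mapP; exists (t i); rewrite ?mem_enum ?permK.
Qed.

Lemma sorted_valuesE x t : sorted_values x = sort ger (values_by_position x t).
Proof. exact/(perm_sortP ger_total ger_trans ger_anti)/perm_values_by_position. Qed.

Lemma sorted_sorted_values x : sorted ger (sorted_values x).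
Proof. exact: sort_sorted. Qed.

Lemma nth_highest_out x m : (n <= m)%N -> nth_highest x m = 0.
Proof. by move=> le_nm; rewrite nth_highestE nth_default ?size_sorted_values. Qed.

Lemma nth_highest_ge0 x m : (forall i, 0 <= x i) -> 0 <= nth_highest x m.
Proof.
move=> x_ge0; have [lt_mn|] := ltnP m n; last by move/(nth_highest_out x) ->.
have : nth_highest x m \in [seq x i | i <- enum 'I_n].
  by rewrite -(mem_sort ger) mem_nth ?size_sorted_values.
by case/mapP=> i _ ->.
Qed.

Lemma le_nth_highest x a b :
  (forall i, 0 <= x i) -> (a <= b)%N -> nth_highest x b <= nth_highest x a.
Proof.
move=> x_ge0; rewrite leq_eqVlt => /orP[/eqP -> // | lt_ab].
have [lt_bn|] := ltnP b n; last by move/(nth_highest_out x) ->; apply: nth_highest_ge0.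
have := sorted_sorted_values x; rewrite sorted_pairwise // => /(pairwiseP 0).
apply => //; rewrite inE size_sorted_values //; exact: ltn_trans lt_ab lt_bn.
Qed.

Lemma sort_dominant_prefix (s : seq R) k :
  (forall a b, (a < b < size s)%N -> (a < k)%N -> nth 0 s b <= nth 0 s a) ->
  sort ger s = take k s ++ sort ger (drop k s).
Proof.
move=> dom.
have lt_take a : (a < size (take k s))%N -> (a < k)%N /\ (a < size s)%N.
  by rewrite size_take; case: (ltnP k (size s)) => ? ?; split; lia.
have perm_s : perm_eq s (take k s ++ sort ger (drop k s)).
  by rewrite -{1}(cat_take_drop k s) perm_cat2l perm_sym perm_sort.
rewrite (perm_sortP ger_total ger_trans ger_anti _ _ perm_s) sorted_sort //.
rewrite sorted_pairwise // pairwise_cat -[pairwise _ (sort _ _)]sorted_pairwise //.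
rewrite (sort_sorted ger_total) andbT; apply/andP; split.
  apply/allrelP => u w /(nthP 0)[a /lt_take[lt_ak lt_as] <-].
  rewrite mem_sort => /(nthP 0)[b]; rewrite size_drop => lt_b <-.
  by rewrite nth_take // nth_drop; apply: dom => //; rewrite ltn_addr //= -ltn_subRL.
apply/(pairwiseP 0) => a b; rewrite !inE => _ /lt_take[lt_bk lt_bs] lt_ab.
by rewrite !nth_take ?(ltn_trans lt_ab) //; apply: dom; rewrite ?lt_ab ?(ltn_trans lt_ab).
Qed.

Lemma sorted_values_dominant k x t : dominant k x t ->
  sorted_values x = take k (values_by_position x t) ++
                    sort ger (drop k (values_by_position x t)).
Proof.
move=> dom; rewrite (sorted_valuesE x t); apply: sort_dominant_prefix => a b.
rewrite size_values_by_position => /andP[lt_ab lt_bn] lt_ak.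
have lt_an := ltn_trans lt_ab lt_bn.
rewrite !(nth_map_ord _ lt_an) (nth_map_ord _ lt_bn); exact: dom.
Qed.

Lemma nth_highest_dominant k x t : dominant k x t ->
  forall m : 'I_n, (m < k)%N -> nth_highest x m = x (t^-1 m)%g.
Proof.
move=> dom m lt_mk; rewrite nth_highestE (sorted_values_dominant dom).
rewrite nth_cat size_take size_values_by_position.
have -> : (m < (if (k < n)%N then k else n))%N by case: ifP.
by rewrite nth_take // nth_values_by_position.
Qed.

Lemma nth_highest_ranking x r : consistent_ranking x r ->
  forall m : 'I_n, nth_highest x m = x (r^-1 m)%g.
Proof.
move=> rk m; apply: (@nth_highest_dominant n) => // a b lt_ab _.
by apply: rk; rewrite !permKV.
Qed.

Lemma le_nth_highest_rank x r (i : 'I_n) m : consistent_ranking x r ->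
  (m <= r i)%N -> x i <= nth_highest x m.
Proof.
move=> rk le_mr; have lt_mn : (m < n)%N by apply: leq_ltn_trans le_mr _.
rewrite -[m]/(val (Ordinal lt_mn)) (nth_highest_ranking rk).
move: le_mr; rewrite leq_eqVlt => /orP[/eqP eq_mr | lt_mr].
  by rewrite [X in (r^-1 X)%g](_ : _ = r i) ?permK //; apply: val_inj.
by apply: rk; rewrite permKV.
Qed.

Lemma value_le_nth_highest_k k x t (i : 'I_n) :
  dominant k x t -> (k <= t i)%N -> x i <= nth_highest x k.
Proof.
move=> dom le_ki; have lt_kn := leq_ltn_trans le_ki (ltn_ord (t i)).
set P := values_by_position x t.
have size_takeP : size (take k P) = k by rewrite size_takel // size_values_by_position ltnW.
rewrite nth_highestE (sorted_values_dominant dom) nth_cat size_takeP ltnn subnn.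
have : x i \in sort ger (drop k P).
  have -> : x i = nth 0 P (t i) by rewrite nth_values_by_position permK.
  rewrite mem_sort -(subnKC le_ki) -nth_drop mem_nth // size_drop size_values_by_position.
  by rewrite ltn_sub2r.
have : sorted ger (sort ger (drop k P)) by apply: sort_sorted.
case: sort => // u us /(order_path_min ger_trans)/allP u_max.
by rewrite inE => /orP[/eqP -> // | /u_max].
Qed.

Lemma values_by_position_update0 v s i :
  values_by_position (update_bid v i 0) s = set_nth 0 (values_by_position v s) (s i) 0.
Proof.
apply: (@eq_from_nth _ 0) => [|m].
  by rewrite size_set_nth !size_values_by_position; apply/esym/maxn_idPr.
rewrite size_values_by_position => lt_mn.
rewrite nth_set_nth /= -[m]/(val (Ordinal lt_mn)) !nth_values_by_position /update_bid.
suff -> : ((s^-1)%g (Ordinal lt_mn) == i) = (Ordinal lt_mn == s i) by [].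
by apply/eqP/eqP => [<- | ->]; rewrite ?permKV ?permK.
Qed.

Lemma sorted_values_update0 k v s i : (forall l, 0 <= v l) -> (k <= n)%N ->
  dominant k v s -> (s i < k)%N ->
  sorted_values (update_bid v i 0) =
  take (s i) (sorted_values v) ++ drop (s i).+1 (sorted_values v) ++ [:: 0].
Proof.
move=> v_ge0 le_kn dom lt_ik.
set w := sorted_values v; set j := val (s i); set P := values_by_position v s.
have size_takeP : size (take k P) = k by rewrite size_takel // size_values_by_position.
have perm_w : perm_eq (values_by_position (update_bid v i 0) s)
                      (take j w ++ drop j.+1 w ++ [:: 0]).
  rewrite values_by_position_update0 set_nthE size_values_by_position ltn_ord.
  rewrite /w (sorted_values_dominant dom) -/P takel_cat ?size_takeP 1?ltnW //.
  rewrite take_takel 1?ltnW // perm_cat2l drop_catl ?size_takeP //.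
  rewrite -{1}(cat_take_drop k P) drop_catl ?size_takeP //.
  by rewrite perm_sym perm_catC /= perm_cons perm_cat2l perm_sort.
rewrite (sorted_valuesE _ s) (perm_sortP ger_total ger_trans ger_anti _ _ perm_w).
rewrite sorted_sort // sorted_pairwise // catA pairwise_cat /= andbT; apply/andP; split.
  apply/allrelP => x y x_in; rewrite inE => /eqP ->.
  have : x \in w by move: x_in; rewrite mem_cat => /orP[/mem_take | /mem_drop].
  by rewrite mem_sort => /mapP[l _ ->]; apply: v_ge0.
rewrite -sorted_pairwise //.
apply: (subseq_sorted ger_trans _ (sorted_sorted_values v)).
rewrite -[X in subseq _ X](cat_take_drop j w); apply: cat_subseq => //.
by rewrite -add1n -drop_drop; case: (drop j w) => //= x t; rewrite drop0; apply: subseq_cons.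
Qed.

Lemma nth_highest_update0 k v s i m : (forall l, 0 <= v l) -> (k <= n)%N ->
  dominant k v s -> (s i < k)%N -> (m < n)%N ->
  nth_highest (update_bid v i 0) m =
  if (m < s i)%N then nth_highest v m else nth_highest v m.+1.
Proof.
move=> v_ge0 le_kn dom lt_ik lt_mn; have lt_in := ltn_ord (s i).
rewrite !nth_highestE (sorted_values_update0 v_ge0 le_kn dom lt_ik) nth_cat.
rewrite size_takel ?size_sorted_values; last exact: ltnW.
have [lt_mi | le_im] := ltnP m (s i); first by rewrite nth_take.
rewrite nth_cat size_drop size_sorted_values.
have [lt_m | le_m] := ltnP (m - s i) (n - (s i).+1).
  by rewrite nth_drop; congr nth; lia.
rewrite (_ : (m - s i - (n - (s i).+1))%N = 0%N) /=; last by lia.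
by rewrite nth_default ?size_sorted_values //; lia.
Qed.

End NthHighest.

Section WeightVector.
Variables (R : realType) (n k : nat) (a : nat -> R).
Hypothesis a_gt : Rn_gt n k a.

Lemma weights_k_bounds : (0 < k)%N /\ (k <= n)%N.
Proof. by case: a_gt => -[]. Qed.

Lemma weight_out j : (k <= j)%N -> a j = 0.
Proof. by case: a_gt => _ [_ _]; apply. Qed.

Lemma weight_step j : a j.+1 <= a j.
Proof.
case: a_gt => _ [lt_a a_last_gt0 _]; have [/lt_a/ltW // | le_kj1] := ltnP j.+1 k.
rewrite (weight_out le_kj1); have [lt_jk | /weight_out -> //] := ltnP j k.
have -> : j = k.-1 by lia.
exact: ltW.
Qed.

Lemma weight_le i j : (i <= j)%N -> a j <= a i.
Proof.
elim: j => [|j IH]; first by rewrite leqn0 => /eqP ->.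
rewrite leq_eqVlt => /orP[/eqP -> // | /IH]; exact: le_trans (weight_step j).
Qed.

Lemma weight_gt0 j : (j < k)%N -> 0 < a j.
Proof.
case: a_gt => _ [_ a_last_gt0 _] lt_jk.
by apply: lt_le_trans a_last_gt0 (weight_le _); lia.
Qed.

Lemma weight_ge0 j : 0 <= a j.
Proof. by have [/weight_gt0/ltW | /weight_out ->] := ltnP j k. Qed.

Lemma weight_lt i j : (i < j)%N -> (i < k)%N -> a j < a i.
Proof.
case: a_gt => _ [lt_a _ _] lt_ij lt_ik; have [lt_jk | le_kj] := ltnP j k.
  by apply: le_lt_trans (weight_le _) (lt_a _ _); lia.
by rewrite weight_out // weight_gt0.
Qed.

Lemma weight_neq0 j : (j < k)%N -> a j != 0.
Proof. by move/weight_gt0/lt0r_neq0. Qed.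

End WeightVector.

Lemma bigmax_attained d (T : orderType d) (I : finType) (F : I -> T) (i0 : I) :
  exists i, \big[Order.max/F i0]_j F j = F i.
Proof.
apply: (big_ind (fun x => exists i, x = F i)); [by exists i0 | | by move=> i; exists i].
by move=> _ _ [i ->] [j ->]; case: (leP (F i) (F j)); [exists j | exists i].
Qed.

Section VCG.
Variables (R : realType) (n k : nat) (beta : nat -> R).
Hypothesis beta_gt : Rn_gt n k beta.
Implicit Types (v : 'I_n -> R) (s t : {perm 'I_n}).

Definition optimal_assignment v s := forall t, welfare beta v t <= welfare beta v s.

Definition top_welfare v := \sum_(0 <= m < k) beta m * nth_highest v m.

Lemma welfare_by_position v t :
  welfare beta v t = \sum_(m : 'I_n) beta m * v (t^-1 m)%g.
Proof.
rewrite /welfare (reindex_inj (@perm_inj _ (t^-1)%g)).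
by apply: eq_bigr => m _; rewrite permKV.
Qed.

Lemma optimal_dominant v s : optimal_assignment v s -> dominant k v s.
Proof.
(* Swapping the agents at positions [a] and [b] does not increase welfare. *)
move=> opt a b lt_ab lt_ak; have neq_ab : a != b by rewrite neq_ltn lt_ab.
have splitD2 (F : 'I_n -> R) :
    \sum_m F m = F a + F b + \sum_(m | (m != a) && (m != b)) F m.
  by rewrite (bigD1 a) //= (bigD1 b) 1?eq_sym //= addrA.
have := opt (s * tperm a b)%g; rewrite !welfare_by_position !splitD2.
have inv_swap m : ((s * tperm a b)^-1)%g m = (s^-1)%g (tperm a b m).
  by rewrite invgM permM tpermV.
rewrite !inv_swap tpermL tpermR (eq_bigr (fun m : 'I_n => beta m * v (s^-1 m)%g)).
  by have := weight_lt beta_gt lt_ab lt_ak; nra.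
by move=> m /andP[m_a m_b]; rewrite inv_swap tpermD // eq_sym.
Qed.

Lemma optimal_welfare v s :
  optimal_assignment v s -> welfare beta v s = top_welfare v.
Proof.
move=> opt; have dom := optimal_dominant opt; have [_ le_kn] := weights_k_bounds beta_gt.
rewrite welfare_by_position (eq_bigr (fun m : 'I_n => beta m * nth_highest v m)).
  rewrite -(big_mkord xpredT (fun m => beta m * nth_highest v m)) /top_welfare.
  rewrite (@big_cat_nat _ _ _ k 0 n _ _ (leq0n k) le_kn) /=.
  rewrite [X in _ + X]big_nat_cond [X in _ + X]big1 ?addr0 //.
  by move=> m /andP[/andP[le_km _] _]; rewrite (weight_out beta_gt) ?mul0r.
move=> m _; have [lt_mk | le_km] := ltnP m k; first by rewrite (nth_highest_dominant dom).
by rewrite (weight_out beta_gt) ?mul0r.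
Qed.

Lemma exists_optimal_assignment v : exists s, optimal_assignment v s.
Proof.
have [s max_s] := bigmax_attained (welfare beta v) 1%g.
by exists s => t; rewrite -max_s; apply: le_bigmax.
Qed.

Lemma bigmax_welfare v :
  \big[Num.max/welfare beta v 1%g]_t welfare beta v t = top_welfare v.
Proof.
have [s max_s] := bigmax_attained (welfare beta v) 1%g.
by rewrite max_s optimal_welfare // => t; rewrite -max_s; apply: le_bigmax.
Qed.

Lemma welfare_othersE v t i :
  welfare_others beta v t i = welfare beta (update_bid v i 0) t.
Proof.
rewrite /welfare (bigD1 i) //= /update_bid eqxx mulr0 add0r.
by apply: eq_bigr => l /negbTE ->.
Qed.

Lemma welfare_update0 v t i :
  welfare beta (update_bid v i 0) t = welfare beta v t - beta (t i) * v i.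
Proof. by rewrite -welfare_othersE /welfare (bigD1 i) //= addrC addrK. Qed.

Lemma clarke_top_welfare v s i : optimal_assignment v s ->
  clarke beta v s i =
  top_welfare (update_bid v i 0) - (top_welfare v - beta (s i) * v i).
Proof.
move=> opt; rewrite /clarke !welfare_othersE; under eq_bigr do rewrite welfare_othersE.
by rewrite bigmax_welfare welfare_update0 (optimal_welfare opt).
Qed.

End VCG.





Lemma externality_telescope (R : comPzRingType) (beta w : nat -> R) j k :
  (j < k)%N -> beta k = 0 ->
  \sum_(0 <= m < k) beta m * (if (m < j)%N then w m else w m.+1)
  - (\sum_(0 <= m < k) beta m * w m - beta j * w j)
  = \sum_(j <= m < k) w m.+1 * (beta m - beta m.+1).
Proof.
case: k => // k lt_jk beta_k; rewrite !(@big_cat_nat _ _ _ j 0 k.+1) ?(ltnW lt_jk) //=.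
under [X in X + _ - _]eq_big_nat => m /andP[_ lt_mj] do rewrite lt_mj.
under [X in _ + X - _]eq_big_nat => m /andP[le_jm _] do rewrite ltnNge le_jm /=.
rewrite [\sum_(j <= m < k.+1) beta m * w m]big_ltn // big_add1 /=.
under [RHS]eq_bigr => m _ do rewrite mulrBr [w _ * _]mulrC [w _ * _]mulrC.
rewrite sumrB [\sum_(j <= m < k.+1) beta m.+1 * _]big_nat_recr //= beta_k mul0r addr0.
ring.
Qed.

Lemma le_sum_sign_change (R : numDomainType) (f : nat -> R) p j k :
  (p <= k)%N -> (j <= k)%N ->
  (forall m, (m < p)%N -> f m <= 0) -> (forall m, (p <= m < k)%N -> 0 <= f m) ->
  \sum_(j <= m < k) f m <= \sum_(p <= m < k) f m.
Proof.
move=> le_pk le_jk f_neg f_pos; have [le_jp | lt_pj] := leqP j p.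
  rewrite (@big_cat_nat _ _ _ p j k _ _ le_jp le_pk) /= gerDr.
  rewrite big_nat_cond sumr_le0 // => m.
  by rewrite andbT => /andP[_ lt_mp]; apply: f_neg.
rewrite [X in _ <= X](@big_cat_nat _ _ _ j p k _ _ (ltnW lt_pj) le_jk) /= lerDr.
rewrite big_nat_cond sumr_ge0 // => m.
by rewrite andbT => /andP[le_pm lt_mj]; apply: f_pos; rewrite le_pm (leq_trans lt_mj).
Qed.

Section VCGPrice.
Variables (R : realType) (n k : nat) (beta : nat -> R).
Hypothesis beta_gt : Rn_gt n k beta.
Implicit Types (v : 'I_n -> R) (s : {perm 'I_n}).

Lemma vcg_price_out v j : (k <= j)%N -> vcg_price k beta v j = 0.
Proof. by move=> le_kj; rewrite /vcg_price big_geq. Qed.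

Lemma vcg_price_tail v j : (n <= j.+1)%N -> vcg_price k beta v j = 0.
Proof.
move=> le_nj; rewrite /vcg_price big_nat_cond big1 // => m /andP[/andP[le_jm _] _].
by rewrite nth_highest_out ?mul0r //; apply: leq_trans le_nj _; rewrite ltnS.
Qed.

Lemma vcg_price_ge0 v j : (forall i, 0 <= v i) -> 0 <= vcg_price k beta v j.
Proof.
move=> v_ge0; apply: sumr_ge0 => m _.
by rewrite mulr_ge0 ?nth_highest_ge0 // subr_ge0 (weight_step beta_gt).
Qed.

Lemma clarke_vcg_price v s i : (forall l, 0 <= v l) ->
  optimal_assignment beta v s -> clarke beta v s i = vcg_price k beta v (s i).
Proof.
move=> v_ge0 opt; rewrite (clarke_top_welfare beta_gt _ opt).
have dom := optimal_dominant beta_gt opt; have [_ le_kn] := weights_k_bounds beta_gt.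
have [lt_ik | le_ki] := ltnP (s i) k.
  have -> : v i = nth_highest v (s i) by rewrite (nth_highest_dominant dom) ?permK.
  rewrite /vcg_price -(externality_telescope _ lt_ik (weight_out beta_gt (leqnn k))).
  congr (_ - _); apply: eq_big_nat => m /andP[_ lt_mk].
  by rewrite (nth_highest_update0 v_ge0 le_kn dom lt_ik) //; apply: leq_trans le_kn.
have i_low (a : 'I_n) : (a < k)%N -> ((s^-1)%g a == i) = false.
  by move=> lt_ak; apply/negbTE/eqP => eq_ai; move: le_ki; rewrite -eq_ai permKV; lia.
have dom0 : dominant k (update_bid v i 0) s.
  move=> a b lt_ab lt_ak; rewrite /update_bid (i_low a lt_ak).
  by case: ifP => _; [apply: v_ge0 | apply: dom].
rewrite (weight_out beta_gt le_ki) mul0r subr0 vcg_price_out // /top_welfare.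
apply/eqP; rewrite subr_eq0; apply/eqP/eq_big_nat => m /andP[_ lt_mk].
have lt_mn := leq_trans lt_mk le_kn; rewrite -[m]/(val (Ordinal lt_mn)).
by rewrite (nth_highest_dominant dom0) // (nth_highest_dominant dom) // /update_bid i_low.
Qed.

Lemma vcg_surplusE v (y : R) j : (j <= k)%N ->
  beta j * y - vcg_price k beta v j =
  \sum_(j <= m < k) (beta m - beta m.+1) * (y - nth_highest v m.+1).
Proof.
move=> le_jk.
have beta_j : beta j = \sum_(j <= m < k) (beta m - beta m.+1).
  have := telescope_sumr beta le_jk; rewrite (weight_out beta_gt (leqnn k)) sub0r => tele.
  by rewrite -[beta j]opprK -tele -sumrN; apply: eq_bigr => m _; rewrite opprB.
rewrite {1}beta_j mulr_suml /vcg_price -sumrB; apply: eq_bigr => m _.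
by rewrite [RHS]mulrBr [nth_highest _ _ * _]mulrC.
Qed.

Lemma vcg_surplus_out v (y : R) j : (k <= j)%N -> beta j * y - vcg_price k beta v j = 0.
Proof. by move=> le_kj; rewrite (weight_out beta_gt le_kj) vcg_price_out // mul0r subr0. Qed.

Lemma vcg_envy_free v s i j : (forall l, 0 <= v l) ->
  optimal_assignment beta v s -> (j <= k)%N ->
  beta j * v i - vcg_price k beta v j <= beta (s i) * v i - vcg_price k beta v (s i).
Proof.
move=> v_ge0 opt le_jk; have dom := optimal_dominant beta_gt opt.
have step_ge0 m : 0 <= beta m - beta m.+1 by rewrite subr_ge0 (weight_step beta_gt).
have [lt_ik | le_ki] := ltnP (s i) k; last first.
  rewrite (vcg_surplus_out _ _ le_ki) vcg_surplusE // big_nat_cond sumr_le0 // => m.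
  rewrite andbT => /andP[_ lt_mk]; apply: mulr_ge0_le0 => //; rewrite subr_le0.
  exact: le_trans (value_le_nth_highest_k dom le_ki) (le_nth_highest v_ge0 lt_mk).
have v_i : v i = nth_highest v (s i) by rewrite (nth_highest_dominant dom) ?permK.
rewrite !vcg_surplusE ?(ltnW lt_ik) // v_i.
apply: (le_sum_sign_change (ltnW lt_ik) le_jk) => // m => [lt_mi | /andP[le_im _]].
  by apply: mulr_ge0_le0 => //; rewrite subr_le0 le_nth_highest.
by apply: mulr_ge0 => //; rewrite subr_ge0 le_nth_highest // (leq_trans le_im).
Qed.

End VCGPrice.

Lemma slot_of_inj k p q : (p < k)%N -> slot_of k p = slot_of k q -> q = p.
Proof.
rewrite /slot_of => lt_pk; rewrite (insubT (fun m => (m < k)%N) lt_pk).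
have [lt_qk | le_kq] := ltnP q k; last by rewrite insubF // ltnNge le_kq.
by rewrite (insubT (fun m => (m < k)%N) lt_qk) => -[].
Qed.

Lemma vcg_gsp_price (R : realType) n k (alpha beta : nat -> R) (v b : 'I_n -> R)
    (o : outcome R n k) :
  Rn_gt n k beta -> (forall l, 0 <= v l) ->
  vcg_outcome beta v o -> gsp_outcome alpha b o ->
  forall m : 'I_n, (m < k)%N -> vcg_price k beta v m = alpha m * nth_highest b m.+1.
Proof.
move=> beta_gt v_ge0 [s [opt ->]] [r [_ o_gsp]] m lt_mk.
have [slot_eq pay_eq] := congr1 (fun o : outcome R n k => (o.1 (s^-1 m)%g, o.2 (s^-1 m)%g)) o_gsp.
move: slot_eq pay_eq; rewrite !ffunE permKV => /(slot_of_inj lt_mk) -> /=.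
by rewrite lt_mk (clarke_vcg_price beta_gt) // permKV.
Qed.

Lemma necessity (R : realType) n k (alpha beta : nat -> R) :
  Rn_gt n k alpha -> Rn_gt n k beta ->
  gsp_vickrey_preserving n k alpha beta ->
  forall v : 'I_n -> R, (forall i, 0 <= v i) ->
  forall j : nat, (j.+1 < k)%N ->
    vcg_price k beta v j.+1 / alpha j.+1 <= vcg_price k beta v j / alpha j.
Proof.
move=> alpha_gt beta_gt vp v v_ge0 j lt_jk; have [_ le_kn] := weights_k_bounds beta_gt.
have [b [o [o_vcg [b_ge0 [o_gsp _]]]]] := vp v v_ge0.
have price_eq m (lt_mk : (m < k)%N) : vcg_price k beta v m = alpha m * nth_highest b m.+1.
  exact: (vcg_gsp_price beta_gt v_ge0 o_vcg o_gsp (m := Ordinal (leq_trans lt_mk le_kn)) lt_mk).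
rewrite !price_eq ?(ltnW lt_jk) // ![alpha _ * _]mulrC.
by rewrite !mulfK ?(weight_neq0 alpha_gt) ?(ltnW lt_jk) // le_nth_highest.
Qed.





Lemma injective_ord_crossing n (g : 'I_n -> 'I_n) (t : 'I_n) :
  injective g -> exists2 p : 'I_n, (p <= t)%N & (t <= g p)%N.
Proof.
move=> g_inj; apply/exists_inP; apply: contraT; rewrite negb_exists_in => /forall_inP g_low.
pose h m := val (g (insubd t m)).
have val_h m : (m <= t)%N -> val (insubd t m) = m.
  by move=> le_mt; rewrite val_insubd (leq_ltn_trans le_mt (ltn_ord t)).
have h_uniq : uniq (map h (iota 0 t.+1)).
  rewrite map_inj_in_uniq ?iota_uniq // => m1 m2; rewrite !mem_iota !add0n /= !ltnS.
  by move=> le1 le2 /val_inj/g_inj eq_m; rewrite -(val_h _ le1) -(val_h _ le2) eq_m.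
have h_sub : {subset map h (iota 0 t.+1) <= iota 0 t}.
  move=> z /mapP[m]; rewrite mem_iota add0n ltnS /= => le_mt ->.
  by rewrite mem_iota add0n /= ltnNge; apply: g_low; rewrite val_h.
by have := uniq_leq_size h_uniq h_sub; rewrite size_map !size_iota ltnn.
Qed.

Lemma gsp_price_lower_bound (R : realType) n (B : nat -> R) (s r : {perm 'I_n}) i x j :
  (forall p q, (p <= q)%N -> B q <= B p) ->
  consistent_ranking (update_bid (fun l => B (s l)) i x) r -> val (r i) = j ->
  (j.+1 < n)%N -> B j.+1 <= nth_highest (update_bid (fun l => B (s l)) i x) j.+1.
Proof.
(* Some agent of position at most [j + 1] is ranked below the deviator. *)
move=> B_le rk ri_j lt_jn.
have g_inj : injective (fun q => r ((s^-1)%g q)) by move=> q1 q2 /perm_inj/perm_inj.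
have [p le_pj le_rp] := injective_ord_crossing (Ordinal lt_jn) g_inj.
have neq_i : (s^-1)%g p != i by apply: contraTneq le_rp => ->; rewrite ri_j ltnn.
apply: le_trans (B_le _ _ le_pj) _.
by have := le_nth_highest_rank rk le_rp; rewrite /update_bid (negbTE neq_i) permKV.
Qed.

Lemma slot_valueE (R : realType) n k (beta : nat -> R) p (y : R) : Rn_gt n k beta ->
  (if slot_of k p is Some j then beta (val j) * y else 0) = beta p * y.
Proof.
move=> beta_gt; rewrite /slot_of; have [lt_pk | le_kp] := ltnP p k.
  by rewrite (insubT (fun m => (m < k)%N) lt_pk).
by rewrite insubF ?(weight_out beta_gt le_kp) ?mul0r // ltnNge le_kp.
Qed.

Section Sufficiency.
Variables (R : realType) (n k : nat) (alpha beta : nat -> R).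
Hypotheses (alpha_gt : Rn_gt n k alpha) (beta_gt : Rn_gt n k beta).
Variable v : 'I_n -> R.
Hypothesis v_ge0 : forall l, 0 <= v l.
Hypothesis price_ratio_decreasing : forall j, (j.+1 < k)%N ->
  vcg_price k beta v j.+1 / alpha j.+1 <= vcg_price k beta v j / alpha j.

Local Notation price := (vcg_price k beta v).

(* Position [m + 1] bids [p_m / alpha_m], making the GSP price of position [m]
   exactly [p_m]; position [0] copies the bid of position [1]. *)
Definition position_bid (m : nat) : R :=
  if (m <= k)%N then price m.-1 / alpha m.-1 else 0.

Lemma position_bid_ge0 m : 0 <= position_bid m.
Proof.
rewrite /position_bid; case: ifP => // _.
by rewrite divr_ge0 ?vcg_price_ge0 ?(weight_ge0 alpha_gt).
Qed.

Lemma price_ratio_le c d : (c <= d)%N -> (d < k)%N ->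
  price d / alpha d <= price c / alpha c.
Proof.
elim: d => [|d IH]; first by rewrite leqn0 => /eqP ->.
rewrite leq_eqVlt => /orP[/eqP -> // | lt_cd] lt_dk.
exact: le_trans (price_ratio_decreasing lt_dk) (IH lt_cd (ltnW lt_dk)).
Qed.

Lemma position_bid_le p q : (p <= q)%N -> position_bid q <= position_bid p.
Proof.
move=> le_pq; rewrite /position_bid.
have [le_qk | _] := leqP q k; last exact: position_bid_ge0.
have [k_gt0 _] := weights_k_bounds alpha_gt.
by rewrite (leq_trans le_pq le_qk); apply: price_ratio_le; lia.
Qed.

Lemma position_bid_price j : (j < k)%N -> alpha j * position_bid j.+1 = price j.
Proof.
by move=> lt_jk; rewrite /position_bid lt_jk mulrC divfK ?(weight_neq0 alpha_gt).
Qed.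

Variable s : {perm 'I_n}.
Hypothesis opt : optimal_assignment beta v s.

Local Notation bids := (fun l => position_bid (s l)).
Local Notation vcg_result :=
  ([ffun i => slot_of k (s i)], [ffun i => clarke beta v s i]).

Lemma bids_ranking : consistent_ranking bids s.
Proof. by move=> i l /ltnW; apply: position_bid_le. Qed.

Lemma gsp_price_bids j : (j < k)%N -> alpha j * nth_highest bids j.+1 = price j.
Proof.
move=> lt_jk; have [lt_jn | le_nj] := ltnP j.+1 n.
  rewrite -[j.+1]/(val (Ordinal lt_jn)) (nth_highest_ranking bids_ranking).
  by rewrite permKV position_bid_price.
by rewrite nth_highest_out // mulr0 vcg_price_tail.
Qed.

Lemma bids_gsp_outcome : gsp_outcome alpha bids vcg_result.
Proof.
exists s; split; first exact: bids_ranking.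
congr pair; apply/ffunP => i; rewrite !ffunE (clarke_vcg_price beta_gt) //.
by case: ifP => [/gsp_price_bids -> // | /negbT]; rewrite -leqNgt => /vcg_price_out ->.
Qed.

Lemma vcg_result_utility i :
  utility beta v vcg_result i = beta (s i) * v i - price (s i).
Proof. by rewrite /utility /= !ffunE (slot_valueE _ _ beta_gt) (clarke_vcg_price beta_gt). Qed.

Lemma no_profitable_deviation i x (o : outcome R n k) : 0 <= x ->
  gsp_outcome alpha (update_bid bids i x) o ->
  utility beta v o i <= utility beta v vcg_result i.
Proof.
move=> x_ge0 [r [rk ->]]; rewrite vcg_result_utility /utility /= !ffunE (slot_valueE _ _ beta_gt).
have [lt_rk | le_kr] := ltnP (r i) k; last first.
  rewrite (weight_out beta_gt le_kr) mul0r subr0.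
  by apply: le_trans (vcg_envy_free beta_gt i v_ge0 opt (leqnn k)); rewrite vcg_surplus_out.
apply: le_trans (vcg_envy_free beta_gt i v_ge0 opt (ltnW lt_rk)); apply: lerB => //.
have [lt_rn | le_nr] := ltnP (r i).+1 n; last first.
  rewrite vcg_price_tail // mulr_ge0 ?(weight_ge0 alpha_gt) // nth_highest_ge0 // => l.
  by rewrite /update_bid; case: ifP => _ //; apply: position_bid_ge0.
rewrite -position_bid_price // ler_wpM2l ?(weight_ge0 alpha_gt) //.
exact: (gsp_price_lower_bound position_bid_le rk).
Qed.

End Sufficiency.

Lemma sufficiency (R : realType) n k (alpha beta : nat -> R) :
  Rn_gt n k alpha -> Rn_gt n k beta ->
  (forall v : 'I_n -> R, (forall i, 0 <= v i) ->
   forall j : nat, (j.+1 < k)%N ->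
     vcg_price k beta v j.+1 / alpha j.+1 <= vcg_price k beta v j / alpha j) ->
  gsp_vickrey_preserving n k alpha beta.
Proof.
move=> alpha_gt beta_gt ratio_dec v v_ge0; have dec := ratio_dec v v_ge0.
have [s opt] := exists_optimal_assignment beta v.
exists (fun l => position_bid k alpha beta v (s l)).
exists ([ffun i => slot_of k (s i)], [ffun i => clarke beta v s i]).
split; first by exists s.
split=> [l | ]; first exact: position_bid_ge0.
split; first exact: bids_gsp_outcome.
by move=> i x x_ge0 o; apply: no_profitable_deviation.
Qed.

Theorem proposition3 (R : realType) (n k : nat) (alpha beta : nat -> R) :
  Rn_gt n k alpha -> Rn_gt n k beta ->
  (gsp_vickrey_preserving n k alpha beta <->
   forall v : 'I_n -> R, (forall i, 0 <= v i) ->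
     forall j : nat, (j.+1 < k)%N ->
       vcg_price k beta v j.+1 / alpha j.+1 <= vcg_price k beta v j / alpha j).
Proof.
by move=> alpha_gt beta_gt; split; [apply: necessity | apply: sufficiency].
Qed.
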